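(* Let $\alpha,\beta$ be relatively prime positive integers. For an integer $t\ge2$, let $n_t=\beta g_tg_{t+1}$, $a_t=(\beta-1)g_{t+1}+\alpha g_t$, and $b_t=g_t$. Then $a(n_t)=a_t$, $b(n_t)=b_t$, and $t(n_t)=t$.
   Context: For positive integers $a_1,a_2$, the $(\alpha,\beta)$-walk $w_k(a_1,a_2)$ is given by $w_1=a_1$, $w_2=a_2$, $w_{k+2}=\alpha w_{k+1}+\beta w_k$ ($k\ge1$). For a positive integer $n$, $s(n;a_1,a_2)$ is the (largest) index $s$ with $w_s(a_1,a_2)=n$ ($-\infty$ if none), and $s(n)=\max_{a_1,a_2\ge1}s(n;a_1,a_2)$. The sequence $g_k$: $g_1=1$, $g_2=\alpha$, $g_{k+2}=\alpha g_{k+1}+\beta g_k$. For $n$ with $s(n)>2$, $a(n),b(n),t(n)$ denote the unique integers $a,b,t$ (which the paper proves exist) with $n=ag_t+\beta bg_{t-1}$, $t\ge2$, $a\le(\beta-1)g_{t+1}+\alpha b$, $b\le g_t$, and such that $a-\alpha b-\ell g_{t+1}$ is not a positive multiple of $\beta$ for any integer $\ell\ge0$. (The conclusion includes that $s(n_t)>2$, so these quantities are defined for $n_t$.) *)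

From Stdlib Require Import ZArith Lia.
Open Scope Z_scope.

Fixpoint lin2 (alpha beta x0 x1 : Z) (k : nat) : Z * Z :=
  match k with
  | O => (x0, x1)
  | S k' => let p := lin2 alpha beta x0 x1 k' in (snd p, alpha * snd p + beta * fst p)
  end.

(* g_0 = 0 (auxiliary, consistent with the recurrence), g_1 = 1, g_2 = alpha,
   g_{k+2} = alpha g_{k+1} + beta g_k. *)
Definition gseq (alpha beta : Z) (k : nat) : Z := fst (lin2 alpha beta 0 1 k).

(* The (alpha,beta)-walk, 1-indexed: w_1 = a1, w_2 = a2,
   w_{k+2} = alpha w_{k+1} + beta w_k.  (Index 0 is not used: walk .. 0 = a1 too.) *)
Definition walk (alpha beta a1 a2 : Z) (k : nat) : Z :=
  fst (lin2 alpha beta a1 a2 (Nat.pred k)).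

Lemma gseq_1 a b : gseq a b 1 = 1. Proof. reflexivity. Qed.
Lemma gseq_2 a b : gseq a b 2 = a. Proof. unfold gseq; simpl; ring. Qed.
Lemma gseq_SS a b k : gseq a b (S (S k)) = a * gseq a b (S k) + b * gseq a b k.
Proof. reflexivity. Qed.
Lemma walk_1 a b x y : walk a b x y 1 = x. Proof. reflexivity. Qed.
Lemma walk_2 a b x y : walk a b x y 2 = y. Proof. reflexivity. Qed.
Lemma walk_SSS a b x y k :
  walk a b x y (S (S (S k))) = a * walk a b x y (S (S k)) + b * walk a b x y (S k).
Proof. reflexivity. Qed.

(* s(n) > m : some walk with positive starting values a1,a2 hits n at an index s > m,
   i.e. max_{a1,a2>=1} s(n;a1,a2) > m. *)
Definition s_gt (alpha beta n : Z) (m : nat) : Prop :=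
  exists a1 a2 : Z, 1 <= a1 /\ 1 <= a2 /\
    exists s : nat, (m < s)%nat /\ walk alpha beta a1 a2 s = n.

Definition abt_cond (alpha beta n a b : Z) (t : nat) : Prop :=
  1 <= a /\ 1 <= b /\ (2 <= t)%nat /\
  n = a * gseq alpha beta t + beta * b * gseq alpha beta (t - 1) /\
  a <= (beta - 1) * gseq alpha beta (t + 1) + alpha * b /\
  b <= gseq alpha beta t /\
  (forall l : Z, 0 <= l ->
     ~ (exists m : Z, 0 < m /\ a - alpha * b - l * gseq alpha beta (t + 1) = m * beta)).

(* The number n_t = beta g_t g_{t+1} is reached by the positive walk
   (g_t, a_t), whose value at index k + 2 is a_t g_{k+1} + beta g_t g_k, at
   index t + 1.  A decomposition n = a g_{k+1} + beta b g_k with a, b >= 1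
   can always be pushed one level down, so the levels at which n decomposes
   form an initial segment; the conditions defining (a(n), b(n), t(n)) say
   exactly that t(n) - 1 is its last element, because a decomposition one
   level higher would, by coprimality of consecutive g's, produce a positive
   multiple of beta of the forbidden form.  Hence t(n_t) = t, and at that
   level the coprimality of g_t and g_{t+1} forces b = g_t and then a = a_t. *)
From Stdlib Require Import ZArith Znumtheory Lia.
Open Scope Z_scope.

Lemma lin2_S alpha beta x0 x1 k :
  lin2 alpha beta x0 x1 (S k) =
  (x1 * gseq alpha beta (S k) + beta * x0 * gseq alpha beta k,
   x1 * gseq alpha beta (S (S k)) + beta * x0 * gseq alpha beta (S k)).
Proof.
  induction k as [|k IH].
  - unfold gseq; simpl; f_equal; ring.
  - change (lin2 alpha beta x0 x1 (S (S k)))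
      with (let p := lin2 alpha beta x0 x1 (S k) in
            (snd p, alpha * snd p + beta * fst p)).
    rewrite IH; cbn [fst snd].
    rewrite (gseq_SS alpha beta (S k)), (gseq_SS alpha beta k).
    f_equal; ring.
Qed.

Lemma walk_gseq alpha beta a1 a2 k :
  walk alpha beta a1 a2 (S (S k)) =
  a2 * gseq alpha beta (S k) + beta * a1 * gseq alpha beta k.
Proof. unfold walk; simpl Nat.pred; rewrite lin2_S; reflexivity. Qed.

Section Gseq.
Variables alpha beta : Z.
Hypothesis alpha_gt0 : 0 < alpha.
Hypothesis beta_gt0 : 0 < beta.
Hypothesis coprime_alpha_beta : Z.gcd alpha beta = 1.
Local Notation G := (gseq alpha beta).

Lemma gseq_S_ge1 k : 1 <= G (S k).
Proof.
  assert (H : 1 <= G (S k) /\ 0 <= G k).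
  { induction k as [|k [IH1 IH0]].
    - split; [rewrite gseq_1 | unfold gseq; simpl]; lia.
    - split; [rewrite gseq_SS; nia | lia]. }
  apply H.
Qed.

Lemma rel_prime_beta_gseq k : rel_prime beta (G (S k)).
Proof.
  induction k as [|k IH].
  - rewrite gseq_1; apply rel_prime_sym, rel_prime_1.
  - apply Zgcd_1_rel_prime.
    rewrite gseq_SS, Z.mul_comm with (n := beta), Z.gcd_add_mult_diag_r.
    apply Zgcd_1_rel_prime, rel_prime_mult; [|exact IH].
    apply rel_prime_sym, Zgcd_1_rel_prime, coprime_alpha_beta.
Qed.

Lemma rel_prime_gseq_S k : rel_prime (G (S k)) (G (S (S k))).
Proof.
  induction k as [|k IH].
  - rewrite gseq_1; apply rel_prime_1.
  - apply Zgcd_1_rel_prime; rewrite (gseq_SS _ _ (S k)).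
    rewrite Z.add_comm, Z.gcd_add_mult_diag_r.
    apply Zgcd_1_rel_prime, rel_prime_mult.
    + apply rel_prime_sym, rel_prime_beta_gseq.
    + apply rel_prime_sym, IH.
Qed.

(* By [walk_gseq], [decomposes_at n k] says that n = w_{k+2}(x, a) for a walk
   with positive starting values, i.e. s(n) >= k + 2. *)
Definition decomposes_at (n : Z) (k : nat) : Prop :=
  exists x a, 1 <= x /\ 1 <= a /\ n = a * G (S k) + beta * x * G k.

Lemma decomposes_at_S n k : decomposes_at n (S k) -> decomposes_at n k.
Proof.
  intros (x & a & x_ge1 & a_ge1 & ->).
  exists a, (alpha * a + beta * x); repeat split; try nia.
  rewrite gseq_SS; ring.
Qed.

Lemma decomposes_at_le n j k :
  (j <= k)%nat -> decomposes_at n k -> decomposes_at n j.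
Proof.
  induction 1; auto using decomposes_at_S.
Qed.

Lemma last_decomposition_unique n j k :
  decomposes_at n j -> ~ decomposes_at n (S j) ->
  decomposes_at n k -> ~ decomposes_at n (S k) -> j = k.
Proof.
  intros Dj nDj Dk nDk.
  destruct (Nat.lt_trichotomy j k) as [lt_jk | [eq_jk | lt_kj]].
  - contradiction (nDj (decomposes_at_le n (S j) k lt_jk Dk)).
  - exact eq_jk.
  - contradiction (nDk (decomposes_at_le n (S k) j lt_kj Dj)).
Qed.

Lemma abt_cond_last_decomposition n a b u :
  abt_cond alpha beta n a b (S u) -> decomposes_at n u /\ ~ decomposes_at n (S u).
Proof.
  unfold abt_cond; rewrite Nat.add_1_r, Nat.sub_succ, Nat.sub_0_r.
  intros (a_ge1 & b_ge1 & _ & En & _ & b_le & no_shift).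
  split; [exists b, a; repeat split; auto; lia|].
  intros (x & a' & x_ge1 & a'_ge1 & En').
  pose proof (gseq_S_ge1 u) as g1; pose proof (gseq_S_ge1 (S u)) as g2.
  (* With t = S u, beta g_{t-1} = g_{t+1} - alpha g_t turns the two decompositions into
     g_{t+1} (a' - b) = g_t (a - alpha b - beta x). *)
  assert (div : (G (S u) | G (S (S u)) * (a' - b))).
  { exists (a - alpha * b - beta * x); rewrite gseq_SS in En' |- *; nia. }
  apply Gauss in div; [|apply rel_prime_gseq_S].
  destruct div as [l El].
  apply (no_shift l); [nia|].
  exists x; split; [lia|].
  apply (Z.mul_reg_l _ _ (G (S u))); [lia|].
  rewrite gseq_SS in En' |- *; nia.
Qed.

Lemma abt_cond_t_unique n a b t a' b' t' :
  abt_cond alpha beta n a b t -> abt_cond alpha beta n a' b' t' -> t = t'.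
Proof.
  destruct t as [|u]; [unfold abt_cond; lia|].
  destruct t' as [|u']; [unfold abt_cond; lia|].
  intros [D nD]%abt_cond_last_decomposition [D' nD']%abt_cond_last_decomposition.
  f_equal; exact (last_decomposition_unique n u u' D nD D' nD').
Qed.

Lemma a_t_no_beta_multiple u l :
  0 <= l ->
  ~ (exists m, 0 < m /\
      (beta - 1) * G (S (S u)) + alpha * G (S u) - alpha * G (S u)
        - l * G (S (S u)) = m * beta).
Proof.
  intros l_ge0 (m & m_gt0 & Em).
  pose proof (gseq_S_ge1 (S u)) as g2.
  assert (div : (beta | G (S (S u)) * (beta - 1 - l))) by (exists m; lia).
  apply Gauss in div; [|apply rel_prime_beta_gseq].
  apply Z.divide_pos_le in div; nia.
Qed.

Lemma gseq_prod_decomposition_unique u a b :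
  1 <= b -> b <= G (S u) ->
  beta * G (S u) * G (S (S u)) = a * G (S u) + beta * b * G u ->
  a = (beta - 1) * G (S (S u)) + alpha * G (S u) /\ b = G (S u).
Proof.
  intros b_ge1 b_le En.
  pose proof (gseq_S_ge1 u) as g1.
  assert (div : (G (S u) | G (S (S u)) * b)).
  { exists (beta * G (S (S u)) - a + alpha * b); rewrite gseq_SS in En |- *; nia. }
  apply Gauss in div; [|apply rel_prime_gseq_S].
  destruct div as [j ->].
  assert (j = 1) as -> by nia.
  split; [|ring].
  apply (Z.mul_reg_l _ _ (G (S u))); [lia|].
  rewrite gseq_SS in En |- *; nia.
Qed.

End Gseq.

Theorem lemma3p2 (alpha beta : Z) (t : nat) :
  0 < alpha -> 0 < beta -> Z.gcd alpha beta = 1 -> (2 <= t)%nat ->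
  let n_t := beta * gseq alpha beta t * gseq alpha beta (t + 1) in
  let a_t := (beta - 1) * gseq alpha beta (t + 1) + alpha * gseq alpha beta t in
  let b_t := gseq alpha beta t in
  s_gt alpha beta n_t 2 /\
  abt_cond alpha beta n_t a_t b_t t /\
  (forall (a b : Z) (t' : nat), abt_cond alpha beta n_t a b t' ->
     a = a_t /\ b = b_t /\ t' = t).
Proof.
  intros alpha_gt0 beta_gt0 coprime t_ge2.
  destruct t as [|u]; [lia|].
  rewrite Nat.add_1_r; intros n_t a_t b_t.
  pose proof (gseq_S_ge1 alpha beta alpha_gt0 beta_gt0 u) as g1.
  pose proof (gseq_S_ge1 alpha beta alpha_gt0 beta_gt0 (S u)) as g2.
  assert (En : n_t = a_t * gseq alpha beta (S u) + beta * b_t * gseq alpha beta u).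
  { subst n_t a_t b_t; rewrite gseq_SS; ring. }
  assert (abt : abt_cond alpha beta n_t a_t b_t (S u)).
  { unfold abt_cond; rewrite Nat.add_1_r, Nat.sub_succ, Nat.sub_0_r.
    subst n_t a_t b_t; repeat split; try nia.
    exact (a_t_no_beta_multiple alpha beta alpha_gt0 beta_gt0 coprime u). }
  split; [|split; [exact abt|]].
  - exists b_t, a_t; split; [|split]; try (subst a_t b_t; nia).
    exists (S (S u)); split; [lia|].
    rewrite walk_gseq, En; ring.
  - intros a b t' abt'.
    pose proof (abt_cond_t_unique alpha beta alpha_gt0 beta_gt0 coprime
                  _ _ _ _ _ _ _ abt abt') as <-.
    destruct abt' as (_ & b_ge1 & _ & En' & _ & b_le & _).
    rewrite Nat.sub_succ, Nat.sub_0_r in En'.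
    destruct (gseq_prod_decomposition_unique alpha beta alpha_gt0 beta_gt0 coprime
                u a b b_ge1 b_le En') as [-> ->].
    auto.
Qed.
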